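(* Let $(\gamma,v_1,v_2):I\to H^3\times\Delta_5$ be a hyperbolic framed curve with $a^2+b^2\neq0$ and $M^2>A^2$ on $I$, and let $\mathcal{F}^d$ be its de Sitter focal surface. Let $t_0\in I$. If $(MA'-AM',N)(t_0)=(0,0)$, then every point $(t_0,\theta)$ is a singular point of $\mathcal{F}^d$. If $(MA'-AM',N)(t_0)\neq(0,0)$, then there exists a singular point of $\mathcal{F}^d$ of the form $(t_0,\theta_0)$.
   Context: $\mathbb{R}^4_1$ denotes $\mathbb{R}^4$ with $\langle x,y\rangle=-x_0y_0+x_1y_1+x_2y_2+x_3y_3$; $H^3=\{x:\langle x,x\rangle=-1\}$, $S^3_1=\{x:\langle x,x\rangle=1\}$. For $x^1,x^2,x^3\in\mathbb{R}^4_1$, $x^1\wedge x^2\wedge x^3$ is the vector given by the formal determinant with first row $(-e_0,e_1,e_2,e_3)$ and the components of $x^1,x^2,x^3$ as remaining rows. Let $\Delta_5=\{(v_1,v_2)\in S^3_1\times S^3_1:\langle v_1,v_2\rangle=0\}$. A hyperbolic framed curve is a smooth map $(\gamma,v_1,v_2):I\to H^3\times\Delta_5$ with $\langle\gamma,v_i\rangle=\langle\gamma',v_i\rangle=0$. Put $\mu=\gamma\wedge v_1\wedge v_2$; then $\gamma'=m\mu$, $v_1'=nv_2+a\mu$, $v_2'=-nv_1+b\mu$, $\mu'=m\gamma-av_1-bv_2$ with $m=\langle\gamma',\mu\rangle$, $n=\langle v_1',v_2\rangle$, $a=\langle v_1',\mu\rangle$, $b=\langle v_2',\mu\rangle$.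 Put $f=ab'-a'b+n(a^2+b^2)$. With $a^2+b^2\neq0$, the Frenet type frame is $n_1=(av_1+bv_2)/\sqrt{a^2+b^2}$, $n_2=(-bv_1+av_2)/\sqrt{a^2+b^2}$, giving $\gamma'=M\mu$, $n_1'=Nn_2+A\mu$, $n_2'=-Nn_1$, $\mu'=M\gamma-An_1$ with $M=m$, $N=f/(a^2+b^2)$, $A=\sqrt{a^2+b^2}$. The de Sitter focal surface ($M^2>A^2$) is $\mathcal{F}^d:I\times[0,2\pi]\to S^3_1$, $\mathcal{F}^d(t,\theta)=\frac{\cos\theta}{\sqrt{M^2-A^2}}(A\gamma-Mn_1)+\sin\theta\,n_2$. A singular point is a point where $d\mathcal{F}^d$ has rank $<2$; the singular set is the zero set of $\lambda^d=\det(\mathcal{F}^d,\mathcal{F}^d_t,\mathcal{F}^d_\theta,\mu)=\frac{\cos\theta(MA'-AM')-\sin\theta\,AN\sqrt{M^2-A^2}}{M^2-A^2}$. *)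

From Stdlib Require Import Reals Lra.
From Coquelicot Require Import Coquelicot.
Open Scope R_scope.

Record V4 := mkV4 { p0 : R; p1 : R; p2 : R; p3 : R }.

Definition vadd (x y : V4) : V4 :=
  mkV4 (p0 x + p0 y) (p1 x + p1 y) (p2 x + p2 y) (p3 x + p3 y).
Definition vscal (c : R) (x : V4) : V4 :=
  mkV4 (c * p0 x) (c * p1 x) (c * p2 x) (c * p3 x).
Definition vzero : V4 := mkV4 0 0 0 0.

Definition lor (x y : V4) : R :=
  - p0 x * p0 y + p1 x * p1 y + p2 x * p2 y + p3 x * p3 y.

Definition det3 (a11 a12 a13 a21 a22 a23 a31 a32 a33 : R) : R :=
  a11 * (a22 * a33 - a23 * a32) - a12 * (a21 * a33 - a23 * a31)
  + a13 * (a21 * a32 - a22 * a31).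

(* x ^ y ^ z : formal determinant with first row (-e0, e1, e2, e3),
   expanded along the first row. *)
Definition wedge3 (x y z : V4) : V4 :=
  let D0 := det3 (p1 x) (p2 x) (p3 x) (p1 y) (p2 y) (p3 y) (p1 z) (p2 z) (p3 z) in
  let D1 := det3 (p0 x) (p2 x) (p3 x) (p0 y) (p2 y) (p3 y) (p0 z) (p2 z) (p3 z) in
  let D2 := det3 (p0 x) (p1 x) (p3 x) (p0 y) (p1 y) (p3 y) (p0 z) (p1 z) (p3 z) in
  let D3 := det3 (p0 x) (p1 x) (p2 x) (p0 y) (p1 y) (p2 y) (p0 z) (p1 z) (p2 z) in
  mkV4 (- D0) (- D1) D2 (- D3).

Definition dV (g : R -> V4) (t : R) : V4 :=
  mkV4 (Derive (fun s => p0 (g s)) t) (Derive (fun s => p1 (g s)) t)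
       (Derive (fun s => p2 (g s)) t) (Derive (fun s => p3 (g s)) t).

Definition smooth_on (I : R -> Prop) (f : R -> R) : Prop :=
  forall (k : nat) (t : R), I t -> ex_derive_n f k t.
Definition smoothV_on (I : R -> Prop) (g : R -> V4) : Prop :=
  smooth_on I (fun s => p0 (g s)) /\ smooth_on I (fun s => p1 (g s)) /\
  smooth_on I (fun s => p2 (g s)) /\ smooth_on I (fun s => p3 (g s)).

Definition hyp_framed_curve (I : R -> Prop) (g v1 v2 : R -> V4) : Prop :=
  smoothV_on I g /\ smoothV_on I v1 /\ smoothV_on I v2 /\
  forall t, I t ->
    lor (g t) (g t) = -1 /\
    lor (v1 t) (v1 t) = 1 /\ lor (v2 t) (v2 t) = 1 /\ lor (v1 t) (v2 t) = 0 /\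
    lor (g t) (v1 t) = 0 /\ lor (g t) (v2 t) = 0 /\
    lor (dV g t) (v1 t) = 0 /\ lor (dV g t) (v2 t) = 0.



Definition mu (g v1 v2 : R -> V4) (t : R) : V4 := wedge3 (g t) (v1 t) (v2 t).
Definition cm (g v1 v2 : R -> V4) (t : R) : R := lor (dV g t) ((mu g v1 v2) t).
Definition cn (g v1 v2 : R -> V4) (t : R) : R := lor (dV v1 t) (v2 t).
Definition ca (g v1 v2 : R -> V4) (t : R) : R := lor (dV v1 t) ((mu g v1 v2) t).
Definition cb (g v1 v2 : R -> V4) (t : R) : R := lor (dV v2 t) ((mu g v1 v2) t).
Definition cf (g v1 v2 : R -> V4) (t : R) : R :=
  (ca g v1 v2) t * Derive (cb g v1 v2) t - Derive (ca g v1 v2) t * (cb g v1 v2) t + (cn g v1 v2) t * ((ca g v1 v2) t ^ 2 + (cb g v1 v2) t ^ 2).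

Definition cM (g v1 v2 : R -> V4) (t : R) : R := (cm g v1 v2) t.
Definition cN (g v1 v2 : R -> V4) (t : R) : R := (cf g v1 v2) t / ((ca g v1 v2) t ^ 2 + (cb g v1 v2) t ^ 2).
Definition cA (g v1 v2 : R -> V4) (t : R) : R := sqrt ((ca g v1 v2) t ^ 2 + (cb g v1 v2) t ^ 2).

Definition fn1 (g v1 v2 : R -> V4) (t : R) : V4 :=
  vscal (/ (cA g v1 v2) t) (vadd (vscal ((ca g v1 v2) t) (v1 t)) (vscal ((cb g v1 v2) t) (v2 t))).
Definition fn2 (g v1 v2 : R -> V4) (t : R) : V4 :=
  vscal (/ (cA g v1 v2) t) (vadd (vscal (- (cb g v1 v2) t) (v1 t)) (vscal ((ca g v1 v2) t) (v2 t))).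

Definition focalD (g v1 v2 : R -> V4) (t th : R) : V4 :=
  vadd (vscal (cos th / sqrt ((cM g v1 v2) t ^ 2 - (cA g v1 v2) t ^ 2))
              (vadd (vscal ((cA g v1 v2) t) (g t)) (vscal (- (cM g v1 v2) t) ((fn1 g v1 v2) t))))
       (vscal (sin th) ((fn2 g v1 v2) t)).

Definition focalD_t (g v1 v2 : R -> V4) (t th : R) : V4 := dV (fun s => (focalD g v1 v2) s th) t.
Definition focalD_th (g v1 v2 : R -> V4) (t th : R) : V4 := dV (fun s => (focalD g v1 v2) t s) th.

(* singular point: the differential (F_t, F_theta) has rank < 2, i.e.
   the two partial derivatives are linearly dependent *)
Definition singular_point (g v1 v2 : R -> V4) (t th : R) : Prop :=
  exists al be : R, (al <> 0 \/ be <> 0) /\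
    vadd (vscal al ((focalD_t g v1 v2) t th)) (vscal be ((focalD_th g v1 v2) t th)) = vzero.

From Stdlib Require Import Reals Lra.
From Coquelicot Require Import Coquelicot.
Open Scope R_scope.

(* Differentiating the pseudo-orthonormality relations of the framed curve gives
   the Frenet type equations gamma' = M mu, n1' = N n2 + A mu, n2' = - N n1.
   Substituting them into the partial derivatives of F^d yields the identity
     F^d_t + (M N / S) F^d_theta = (Lambda / S^3) (M gamma - A n1),
   where S = sqrt (M^2 - A^2) and Lambda = (M A' - A M') cos theta - S A N sin theta
   is the numerator of lambda^d.  Hence (t0, theta) is singular
   whenever Lambda vanishes: for every theta if M A' - A M' = N = 0, and otherwise
   for some theta in [0, pi] by the intermediate value theorem, Lambda taking
   opposite values at 0 and pi. *)

Definition vcoord (k : nat) (x : V4) : R :=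
  match k with 0%nat => p0 x | 1%nat => p1 x | 2%nat => p2 x | _ => p3 x end.

Lemma V4_ext x y : (forall k, vcoord k x = vcoord k y) -> x = y.
Proof.
destruct x, y; intros H; f_equal;
  [apply (H 0%nat) | apply (H 1%nat) | apply (H 2%nat) | apply (H 3%nat)].
Qed.

Lemma vcoord_add k x y : vcoord k (vadd x y) = vcoord k x + vcoord k y.
Proof. now destruct k as [|[|[|k]]]. Qed.

Lemma vcoord_scal k c x : vcoord k (vscal c x) = c * vcoord k x.
Proof. now destruct k as [|[|[|k]]]. Qed.

Lemma vcoord_zero k : vcoord k vzero = 0.
Proof. now destruct k as [|[|[|k]]]. Qed.

Lemma vcoord_dV k h t : vcoord k (dV h t) = Derive (fun s => vcoord k (h s)) t.
Proof. now destruct k as [|[|[|k]]]. Qed.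

Definition is_deriveV (h : R -> V4) (t : R) (v : V4) : Prop :=
  forall k, is_derive (fun s => vcoord k (h s)) t (vcoord k v).

Definition ex_deriveV (h : R -> V4) (t : R) : Prop :=
  forall k, ex_derive (fun s => vcoord k (h s)) t.

Lemma is_deriveV_unique h t v : is_deriveV h t v -> dV h t = v.
Proof.
intros H; apply V4_ext; intros k; rewrite vcoord_dV; exact (is_derive_unique _ _ _ (H k)).
Qed.

Lemma ex_deriveV_dV h t : ex_deriveV h t -> is_deriveV h t (dV h t).
Proof. intros H k; rewrite vcoord_dV; exact (Derive_correct _ _ (H k)). Qed.

Lemma is_deriveV_ext h t v w : is_deriveV h t v -> v = w -> is_deriveV h t w.
Proof. now intros H <-. Qed.

Lemma is_deriveV_const (v : V4) t : is_deriveV (fun _ => v) t vzero.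
Proof. intros k; rewrite vcoord_zero; exact (is_derive_const _ t). Qed.

Lemma is_deriveV_add x y t x' y' :
  is_deriveV x t x' -> is_deriveV y t y' ->
  is_deriveV (fun s => vadd (x s) (y s)) t (vadd x' y').
Proof.
intros Hx Hy k; rewrite vcoord_add.
apply (is_derive_ext (fun s => vcoord k (x s) + vcoord k (y s))).
- intros s; symmetry; apply vcoord_add.
- exact (is_derive_plus _ _ _ _ _ (Hx k) (Hy k)).
Qed.

Lemma is_deriveV_scal (c : R -> R) h t c' v :
  is_derive c t c' -> is_deriveV h t v ->
  is_deriveV (fun s => vscal (c s) (h s)) t (vadd (vscal c' (h t)) (vscal (c t) v)).
Proof.
intros Hc Hh k; rewrite vcoord_add, !vcoord_scal.
apply (is_derive_ext (fun s => c s * vcoord k (h s))).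
- intros s; symmetry; apply vcoord_scal.
- exact (is_derive_mult _ _ _ _ _ Hc (Hh k) Rmult_comm).
Qed.

Lemma lor_sym x y : lor x y = lor y x.
Proof. unfold lor; ring. Qed.

Lemma is_derive_eq (f : R -> R) (t l l' : R) : is_derive f t l -> l = l' -> is_derive f t l'.
Proof. now intros H <-. Qed.

Lemma is_derive_lor x y t x' y' :
  is_deriveV x t x' -> is_deriveV y t y' ->
  is_derive (fun s => lor (x s) (y s)) t (lor x' (y t) + lor (x t) y').
Proof.
intros Hx Hy.
generalize (Hx 0%nat) (Hx 1%nat) (Hx 2%nat) (Hx 3%nat)
  (Hy 0%nat) (Hy 1%nat) (Hy 2%nat) (Hy 3%nat); cbn [vcoord]; intros.
unfold lor; eapply is_derive_eq.
- repeat refine (is_derive_plus _ _ _ _ _ _ _);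
    refine (Derive.is_derive_mult _ _ _ _ _ _ _); try refine (is_derive_opp _ _ _ _);
    eassumption.
- unfold plus, opp; simpl; ring.
Qed.

Lemma lor_wedge3_self u1 u2 u3 :
  lor (wedge3 u1 u2 u3) (wedge3 u1 u2 u3) =
  - det3 (lor u1 u1) (lor u1 u2) (lor u1 u3)
         (lor u1 u2) (lor u2 u2) (lor u2 u3)
         (lor u1 u3) (lor u2 u3) (lor u3 u3).
Proof. destruct u1, u2, u3; unfold lor, wedge3, det3; simpl; ring. Qed.

(* Cramer's rule for the frame (u1, u2, u3, u1 ^ u2 ^ u3): the coefficients a_ij
   form the adjugate of the Gram matrix of u1, u2, u3. *)
Lemma wedge3_cramer (u1 u2 u3 x : V4) k :
  let m := wedge3 u1 u2 u3 in
  let g11 := lor u1 u1 in let g12 := lor u1 u2 in let g13 := lor u1 u3 in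
  let g22 := lor u2 u2 in let g23 := lor u2 u3 in let g33 := lor u3 u3 in
  let a11 := g22 * g33 - g23 * g23 in let a22 := g11 * g33 - g13 * g13 in
  let a33 := g11 * g22 - g12 * g12 in let a12 := g13 * g23 - g12 * g33 in
  let a13 := g12 * g23 - g13 * g22 in let a23 := g12 * g13 - g11 * g23 in
  lor m m * vcoord k x =
  - ((a11 * lor x u1 + a12 * lor x u2 + a13 * lor x u3) * vcoord k u1
     + (a12 * lor x u1 + a22 * lor x u2 + a23 * lor x u3) * vcoord k u2
     + (a13 * lor x u1 + a23 * lor x u2 + a33 * lor x u3) * vcoord k u3)
  + lor x m * vcoord k m.
Proof.
destruct u1, u2, u3, x; unfold lor, wedge3, det3; destruct k as [|[|[|k]]]; simpl; ring.
Qed.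

Lemma frame_expand u1 u2 u3 x :
  lor u1 u1 = -1 -> lor u2 u2 = 1 -> lor u3 u3 = 1 ->
  lor u1 u2 = 0 -> lor u1 u3 = 0 -> lor u2 u3 = 0 ->
  x = vadd (vadd (vscal (- lor x u1) u1) (vscal (lor x u2) u2))
           (vadd (vscal (lor x u3) u3) (vscal (lor x (wedge3 u1 u2 u3)) (wedge3 u1 u2 u3))).
Proof.
intros H11 H22 H33 H12 H13 H23.
assert (Hmm : lor (wedge3 u1 u2 u3) (wedge3 u1 u2 u3) = 1).
{ rewrite lor_wedge3_self, H11, H22, H33, H12, H13, H23; unfold det3; ring. }
apply V4_ext; intros k.
generalize (wedge3_cramer u1 u2 u3 x k); cbv zeta.
rewrite Hmm, H11, H22, H33, H12, H13, H23, !vcoord_add, !vcoord_scal.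
lra.
Qed.

Lemma is_derive_locally_const lo hi (f : R -> R) t c l :
  lo < t < hi -> (forall s, lo < s < hi -> f s = c) -> is_derive f t l -> l = 0.
Proof.
intros Ht Hf Hd.
assert (Hloc : locally t (fun s => c = f s)).
{ assert (Hopen : open (fun s => lo < s < hi)) by (apply open_and; [apply open_gt | apply open_lt]).
  apply (filter_imp (fun s => lo < s < hi)); [intros s Hs; symmetry; now apply Hf | exact (Hopen t Ht)]. }
apply (is_derive_unique f t l) in Hd.
rewrite <- Hd; apply is_derive_unique.
exact (is_derive_ext_loc _ _ _ _ Hloc (is_derive_const c t)).
Qed.

Lemma lor_dV_of_const lo hi x y t c :
  lo < t < hi -> (forall s, lo < s < hi -> lor (x s) (y s) = c) ->
  ex_deriveV x t -> ex_deriveV y t ->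
  lor (dV x t) (y t) + lor (x t) (dV y t) = 0.
Proof.
intros Ht Hc Hx Hy.
exact (is_derive_locally_const lo hi _ t c _ Ht Hc
         (is_derive_lor _ _ _ _ _ (ex_deriveV_dV _ _ Hx) (ex_deriveV_dV _ _ Hy))).
Qed.

Lemma smoothV_ex_deriveV I h t : smoothV_on I h -> I t -> ex_deriveV h t.
Proof.
intros (H0 & H1 & H2 & H3) Ht [|[|[|k]]];
  [exact (H0 1%nat t Ht) | exact (H1 1%nat t Ht) | exact (H2 1%nat t Ht) | exact (H3 1%nat t Ht)].
Qed.

Lemma smoothV_ex_deriveV_dV I h t : smoothV_on I h -> I t -> ex_deriveV (dV h) t.
Proof.
intros (H0 & H1 & H2 & H3) Ht [|[|[|k]]];
  [exact (H0 2%nat t Ht) | exact (H1 2%nat t Ht) | exact (H2 2%nat t Ht) | exact (H3 2%nat t Ht)].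
Qed.

Ltac lor_constancy Hc :=
  eapply lor_dV_of_const; [eassumption | intros s Hs; apply (Hc s Hs) | assumption | assumption].

(* Differentiating the constant inner products of the frame shows that the
   coefficient matrix of the frame derivatives is skew with respect to lor. *)
Lemma framed_curve_frenet lo hi g v1 v2 t :
  hyp_framed_curve (fun s => lo < s < hi) g v1 v2 -> lo < t < hi ->
  dV g t = vscal (cm g v1 v2 t) (mu g v1 v2 t) /\
  dV v1 t = vadd (vscal (cn g v1 v2 t) (v2 t)) (vscal (ca g v1 v2 t) (mu g v1 v2 t)) /\
  dV v2 t = vadd (vscal (- cn g v1 v2 t) (v1 t)) (vscal (cb g v1 v2 t) (mu g v1 v2 t)).
Proof.
intros (Hg & Hv1 & Hv2 & Hc) Ht.
pose proof (smoothV_ex_deriveV _ _ _ Hg Ht) as Dg.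
pose proof (smoothV_ex_deriveV _ _ _ Hv1 Ht) as D1.
pose proof (smoothV_ex_deriveV _ _ _ Hv2 Ht) as D2.
destruct (Hc t Ht) as (Hgg & H11 & H22 & H12 & Hg1 & Hg2 & Hdg1 & Hdg2).
assert (Egg : lor (dV g t) (g t) + lor (g t) (dV g t) = 0) by lor_constancy Hc.
assert (Eg1 : lor (dV g t) (v1 t) + lor (g t) (dV v1 t) = 0) by lor_constancy Hc.
assert (Eg2 : lor (dV g t) (v2 t) + lor (g t) (dV v2 t) = 0) by lor_constancy Hc.
assert (E11 : lor (dV v1 t) (v1 t) + lor (v1 t) (dV v1 t) = 0) by lor_constancy Hc.
assert (E22 : lor (dV v2 t) (v2 t) + lor (v2 t) (dV v2 t) = 0) by lor_constancy Hc.
assert (E12 : lor (dV v1 t) (v2 t) + lor (v1 t) (dV v2 t) = 0) by lor_constancy Hc.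
rewrite (lor_sym (g t)) in Egg, Eg1, Eg2.
rewrite (lor_sym (v1 t)) in E11, E12.
rewrite (lor_sym (v2 t)) in E22.
pose proof (frame_expand _ _ _ (dV g t) Hgg H11 H22 Hg1 Hg2 H12) as Xg.
pose proof (frame_expand _ _ _ (dV v1 t) Hgg H11 H22 Hg1 Hg2 H12) as X1.
pose proof (frame_expand _ _ _ (dV v2 t) Hgg H11 H22 Hg1 Hg2 H12) as X2.
unfold cm, cn, ca, cb, mu.
repeat split; [rewrite Xg at 1 | rewrite X1 at 1 | rewrite X2 at 1];
  apply V4_ext; intros k; rewrite !vcoord_add, !vcoord_scal.
- replace (lor (dV g t) (g t)) with 0 by lra; rewrite Hdg1, Hdg2; ring.
- replace (lor (dV v1 t) (g t)) with 0 by lra.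
  replace (lor (dV v1 t) (v1 t)) with 0 by lra; ring.
- replace (lor (dV v2 t) (g t)) with 0 by lra.
  replace (lor (dV v2 t) (v2 t)) with 0 by lra.
  replace (lor (dV v2 t) (v1 t)) with (- lor (dV v1 t) (v2 t)) by lra; ring.
Qed.

Lemma ex_derive_lor_wedge3 (x y z w : R -> V4) t :
  ex_deriveV x t -> ex_deriveV y t -> ex_deriveV z t -> ex_deriveV w t ->
  ex_derive (fun s => lor (x s) (wedge3 (y s) (z s) (w s))) t.
Proof.
intros Hx Hy Hz Hw.
generalize (Hx 0%nat) (Hx 1%nat) (Hx 2%nat) (Hx 3%nat) (Hy 0%nat) (Hy 1%nat) (Hy 2%nat) (Hy 3%nat)
  (Hz 0%nat) (Hz 1%nat) (Hz 2%nat) (Hz 3%nat) (Hw 0%nat) (Hw 1%nat) (Hw 2%nat) (Hw 3%nat).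
cbn [vcoord]; intros; unfold lor, wedge3, det3; cbn [p0 p1 p2 p3].
repeat match goal with
| |- ex_derive (fun s => _ + _) _ => refine (ex_derive_plus _ _ _ _ _)
| |- ex_derive (fun s => _ - _) _ => refine (ex_derive_minus _ _ _ _ _)
| |- ex_derive (fun s => _ * _) _ => refine (ex_derive_mult _ _ _ _ _)
| |- ex_derive (fun s => - _) _ => refine (ex_derive_opp _ _ _)
end; assumption.
Qed.

Definition frenet_A (a b : R -> R) (s : R) : R := sqrt (a s ^ 2 + b s ^ 2).

Definition frenet_n1 (a b : R -> R) (v1 v2 : R -> V4) (s : R) : V4 :=
  vscal (/ frenet_A a b s) (vadd (vscal (a s) (v1 s)) (vscal (b s) (v2 s))).

Definition frenet_n2 (a b : R -> R) (v1 v2 : R -> V4) (s : R) : V4 :=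
  vscal (/ frenet_A a b s) (vadd (vscal (- b s) (v1 s)) (vscal (a s) (v2 s))).

Definition frenet_N (a b n a' b' : R) : R :=
  (a * b' - a' * b + n * (a ^ 2 + b ^ 2)) / (a ^ 2 + b ^ 2).

Section FrenetTypeFrame.

Variables (a b n : R -> R) (v1 v2 m : R -> V4) (t a' b' : R).
Hypothesis Ha : is_derive a t a'.
Hypothesis Hb : is_derive b t b'.
Hypothesis Hv1 : is_deriveV v1 t (vadd (vscal (n t) (v2 t)) (vscal (a t) (m t))).
Hypothesis Hv2 : is_deriveV v2 t (vadd (vscal (- n t) (v1 t)) (vscal (b t) (m t))).
Hypothesis Hab : 0 < a t ^ 2 + b t ^ 2.

Lemma frenet_A_pos : 0 < frenet_A a b t.
Proof. now apply sqrt_lt_R0. Qed.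

Lemma frenet_A_sqr : frenet_A a b t ^ 2 = a t ^ 2 + b t ^ 2.
Proof. unfold frenet_A; rewrite <- Rsqr_pow2; apply Rsqr_sqrt; lra. Qed.

Lemma is_derive_frenet_A :
  is_derive (frenet_A a b) t ((a t * a' + b t * b') / frenet_A a b t).
Proof.
pose proof frenet_A_pos as HA; unfold frenet_A in *.
eapply is_derive_eq.
- apply is_derive_sqrt; [| exact Hab].
  refine (is_derive_plus _ _ _ _ _ _ _); apply is_derive_pow; eassumption.
- unfold plus; simpl in *; field; lra.
Qed.

Lemma is_derive_inv_frenet_A :
  is_derive (fun s => / frenet_A a b s) t
    (- (a t * a' + b t * b') / ((a t ^ 2 + b t ^ 2) * frenet_A a b t)).
Proof.
pose proof frenet_A_pos as HA; pose proof frenet_A_sqr as HA2.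
eapply is_derive_eq.
- apply is_derive_inv; [exact is_derive_frenet_A | lra].
- rewrite HA2; field; lra.
Qed.

Lemma is_deriveV_frenet_n1 :
  is_deriveV (frenet_n1 a b v1 v2) t
    (vadd (vscal (frenet_N (a t) (b t) (n t) a' b') (frenet_n2 a b v1 v2 t))
          (vscal (frenet_A a b t) (m t))).
Proof.
pose proof frenet_A_pos as HA; pose proof frenet_A_sqr as HA2.
eapply is_deriveV_ext.
- apply is_deriveV_scal; [exact is_derive_inv_frenet_A |].
  apply is_deriveV_add; apply is_deriveV_scal; eassumption.
- unfold frenet_n2, frenet_N; apply V4_ext; intros k.
  repeat rewrite ?vcoord_add, ?vcoord_scal.
  replace (frenet_A a b t * vcoord k (m t))
    with ((a t ^ 2 + b t ^ 2) / frenet_A a b t * vcoord k (m t)) by (rewrite <- HA2; field; lra).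
  field; lra.
Qed.

Lemma is_deriveV_frenet_n2 :
  is_deriveV (frenet_n2 a b v1 v2) t
    (vscal (- frenet_N (a t) (b t) (n t) a' b') (frenet_n1 a b v1 v2 t)).
Proof.
pose proof frenet_A_pos as HA; pose proof frenet_A_sqr as HA2.
eapply is_deriveV_ext.
- apply is_deriveV_scal; [exact is_derive_inv_frenet_A |].
  apply is_deriveV_add; apply is_deriveV_scal; try eassumption.
  refine (is_derive_opp _ _ _ Hb).
- unfold frenet_n1, frenet_N; apply V4_ext; intros k.
  repeat rewrite ?vcoord_add, ?vcoord_scal.
  change (opp b') with (- b'); field; lra.
Qed.

End FrenetTypeFrame.

Definition focal_map (M A : R -> R) (g n1 n2 : R -> V4) (s th : R) : V4 :=
  vadd (vscal (cos th / sqrt (M s ^ 2 - A s ^ 2))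
              (vadd (vscal (A s) (g s)) (vscal (- M s) (n1 s))))
       (vscal (sin th) (n2 s)).

Section FocalMap.

Variables (M A : R -> R) (g n1 n2 m : R -> V4) (t M' A' N : R).
Hypothesis HM : is_derive M t M'.
Hypothesis HA : is_derive A t A'.
Hypothesis Hg : is_deriveV g t (vscal (M t) (m t)).
Hypothesis Hn1 : is_deriveV n1 t (vadd (vscal N (n2 t)) (vscal (A t) (m t))).
Hypothesis Hn2 : is_deriveV n2 t (vscal (- N) (n1 t)).
Hypothesis HMA : A t ^ 2 < M t ^ 2.

Lemma focal_map_dependence th :
  let S := sqrt (M t ^ 2 - A t ^ 2) in
  vadd (dV (fun s => focal_map M A g n1 n2 s th) t)
       (vscal (M t * N / S) (dV (focal_map M A g n1 n2 t) th))
  = vscal (((M t * A' - A t * M') * cos th - S * A t * N * sin th) / S ^ 3)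
          (vadd (vscal (M t) (g t)) (vscal (- A t) (n1 t))).
Proof.
intros S.
assert (HS : 0 < S) by (apply sqrt_lt_R0; lra).
assert (HS2 : S ^ 2 = M t ^ 2 - A t ^ 2) by (unfold S; rewrite <- Rsqr_pow2; apply Rsqr_sqrt; lra).
eassert (Dt : is_deriveV (fun s => focal_map M A g n1 n2 s th) t _).
{ apply is_deriveV_add; apply is_deriveV_scal.
  - apply (is_derive_ext (fun s => cos th * / sqrt (M s ^ 2 - A s ^ 2))); [reflexivity |].
    refine (Derive.is_derive_mult _ _ _ _ _ (is_derive_const _ _) _).
    apply is_derive_inv; [| fold S; lra].
    apply is_derive_sqrt; [| lra].
    refine (is_derive_minus _ _ _ _ _ _ _); apply is_derive_pow; eassumption.
  - apply is_deriveV_add; apply is_deriveV_scal; try eassumption.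
    refine (is_derive_opp _ _ _ HM).
  - exact (is_derive_const _ _).
  - exact Hn2. }
eassert (Dth : is_deriveV (focal_map M A g n1 n2 t) th _).
{ apply is_deriveV_add; apply is_deriveV_scal.
  - apply (is_derive_ext (fun s => cos s * / S)); [reflexivity |].
    exact (Derive.is_derive_mult _ _ _ _ _ (is_derive_cos _) (is_derive_const _ _)).
  - exact (is_deriveV_const _ _).
  - exact (is_derive_sin _).
  - exact (is_deriveV_const _ _). }
rewrite (is_deriveV_unique _ _ _ Dt), (is_deriveV_unique _ _ _ Dth).
cbv beta; change (sqrt (M t ^ 2 - A t ^ 2)) with S; clearbody S.
apply V4_ext; intros k.
repeat rewrite ?vcoord_add, ?vcoord_scal, ?vcoord_zero.
unfold zero, minus, opp, plus; simpl.
(* The identity holds only modulo S ^ 2 = M ^ 2 - A ^ 2. *)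
field_simplify_eq; [| lra].
replace (S ^ 3) with (S * S ^ 2) by ring.
rewrite HS2; ring.
Qed.

Lemma focal_map_rank_deficient th :
  (M t * A' - A t * M') * cos th - sqrt (M t ^ 2 - A t ^ 2) * A t * N * sin th = 0 ->
  exists al be : R, (al <> 0 \/ be <> 0) /\
    vadd (vscal al (dV (fun s => focal_map M A g n1 n2 s th) t))
         (vscal be (dV (focal_map M A g n1 n2 t) th)) = vzero.
Proof.
intros Hlambda.
pose proof (focal_map_dependence th) as E; cbv zeta in E; rewrite Hlambda in E.
eexists 1, _; split; [left; lra |].
apply V4_ext; intros k; apply (f_equal (vcoord k)) in E.
rewrite !vcoord_add, !vcoord_scal, vcoord_zero in *.
rewrite Rmult_1_l, E; unfold Rdiv; ring.
Qed.

End FocalMap.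

Lemma framed_curve_invariants_derivable lo hi g v1 v2 t :
  hyp_framed_curve (fun s => lo < s < hi) g v1 v2 -> lo < t < hi ->
  ex_derive (ca g v1 v2) t /\ ex_derive (cb g v1 v2) t /\ ex_derive (cM g v1 v2) t.
Proof.
intros (Hg & Hv1 & Hv2 & _) Ht.
pose proof (smoothV_ex_deriveV _ _ _ Hg Ht); pose proof (smoothV_ex_deriveV _ _ _ Hv1 Ht).
pose proof (smoothV_ex_deriveV _ _ _ Hv2 Ht).
repeat split; apply ex_derive_lor_wedge3; auto; eapply smoothV_ex_deriveV_dV; eassumption.
Qed.

Lemma singular_point_of_lambda lo hi g v1 v2 t th :
  hyp_framed_curve (fun s => lo < s < hi) g v1 v2 ->
  ca g v1 v2 t ^ 2 + cb g v1 v2 t ^ 2 <> 0 ->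
  cA g v1 v2 t ^ 2 < cM g v1 v2 t ^ 2 ->
  lo < t < hi ->
  (cM g v1 v2 t * Derive (cA g v1 v2) t - cA g v1 v2 t * Derive (cM g v1 v2) t) * cos th
    - sqrt (cM g v1 v2 t ^ 2 - cA g v1 v2 t ^ 2) * cA g v1 v2 t * cN g v1 v2 t * sin th = 0 ->
  singular_point g v1 v2 t th.
Proof.
intros HF Hab HMA Ht.
destruct (framed_curve_frenet _ _ _ _ _ _ HF Ht) as (Eg & Ev1 & Ev2).
destruct (framed_curve_invariants_derivable _ _ _ _ _ _ HF Ht) as (Da & Db & DM).
destruct HF as (Hg & Hv1 & Hv2 & _).
pose proof (ex_deriveV_dV _ _ (smoothV_ex_deriveV _ _ _ Hg Ht)) as Dg; rewrite Eg in Dg.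
pose proof (ex_deriveV_dV _ _ (smoothV_ex_deriveV _ _ _ Hv1 Ht)) as Dv1; rewrite Ev1 in Dv1.
pose proof (ex_deriveV_dV _ _ (smoothV_ex_deriveV _ _ _ Hv2 Ht)) as Dv2; rewrite Ev2 in Dv2.
assert (Hab' : 0 < ca g v1 v2 t ^ 2 + cb g v1 v2 t ^ 2).
{ pose proof (pow2_ge_0 (ca g v1 v2 t)); pose proof (pow2_ge_0 (cb g v1 v2 t)); lra. }
pose proof (is_derive_frenet_A _ _ _ _ _ (Derive_correct _ _ Da) (Derive_correct _ _ Db) Hab') as DA.
(* focalD, cA, fn1, fn2 and cN are, by conversion, focal_map, frenet_A, frenet_n1,
   frenet_n2 and frenet_N applied to the invariants of the framed curve. *)
apply (focal_map_rank_deficient _ _ _ _ _ (mu g v1 v2) _ _ _ _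
         (Derive_correct _ _ DM) (Derive_correct _ _ (ex_intro _ _ DA)) Dg); [| | exact HMA].
- exact (is_deriveV_frenet_n1 _ _ _ _ _ _ _ _ _
           (Derive_correct _ _ Da) (Derive_correct _ _ Db) Dv1 Dv2 Hab').
- exact (is_deriveV_frenet_n2 _ _ _ _ _ _ _ _ _
           (Derive_correct _ _ Da) (Derive_correct _ _ Db) Dv1 Dv2 Hab').
Qed.

Lemma trig_combination_root (D C : R) :
  exists th, 0 <= th <= PI /\ D * cos th - C * sin th = 0.
Proof.
assert (Hcont : continuity (fun x => D * cos x - C * sin x)) by reg.
destruct (IVT_cor _ 0 PI Hcont) as (th & Hth & Hroot).
- pose proof PI_RGT_0; lra.
- rewrite cos_0, sin_0, cos_PI, sin_PI; nra.
- now exists th.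
Qed.

Theorem mainTheorem3 (lo hi : R) (g v1 v2 : R -> V4) (t0 : R) :
  lo < hi ->
  hyp_framed_curve (fun t => lo < t < hi) g v1 v2 ->
  (forall t, lo < t < hi -> ca g v1 v2 t ^ 2 + cb g v1 v2 t ^ 2 <> 0) ->
  (forall t, lo < t < hi -> cM g v1 v2 t ^ 2 > cA g v1 v2 t ^ 2) ->
  lo < t0 < hi ->
  ((cM g v1 v2 t0 * Derive (cA g v1 v2) t0 - cA g v1 v2 t0 * Derive (cM g v1 v2) t0 = 0
     /\ cN g v1 v2 t0 = 0) ->
     forall th, 0 <= th <= 2 * PI -> singular_point g v1 v2 t0 th) /\
  (~ (cM g v1 v2 t0 * Derive (cA g v1 v2) t0 - cA g v1 v2 t0 * Derive (cM g v1 v2) t0 = 0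
     /\ cN g v1 v2 t0 = 0) ->
     exists th0, 0 <= th0 <= 2 * PI /\ singular_point g v1 v2 t0 th0).
Proof.
intros _ HF Hab HMA Ht.
pose proof (fun th => singular_point_of_lambda lo hi g v1 v2 t0 th HF (Hab t0 Ht) (HMA t0 Ht) Ht)
  as Hsing.
split.
- intros [HD HN] th _; apply Hsing; rewrite HD, HN; ring.
- intros _.
  destruct (trig_combination_root
              (cM g v1 v2 t0 * Derive (cA g v1 v2) t0 - cA g v1 v2 t0 * Derive (cM g v1 v2) t0)
              (sqrt (cM g v1 v2 t0 ^ 2 - cA g v1 v2 t0 ^ 2) * cA g v1 v2 t0 * cN g v1 v2 t0))
    as (th & Hth & Hroot).
  exists th; split; [pose proof PI_RGT_0; lra |].
  now apply Hsing.
Qed.
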